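(* Let $d\ge1$, $L>0$, $V\in\mathscr V_N$, and suppose that for some $\theta_d\in[0,\infty)$ there is $\rho\in\mathscr P$, not a.e. equal to $\rho_0$, with $\mathcal F_{\theta_d}(\rho)\le\mathcal F_{\theta_d}(\rho_0)$. Then for every $\theta>\theta_d$, $\rho_0$ is not a minimizer of $\mathcal F_\theta$ over $\mathscr P$.
   Context: $\mathbb T_L^d=\mathbb R^d/(L\mathbb Z)^d$. The class $\mathscr V$ consists of measurable $V:\mathbb R^d\to\mathbb R$ with $V\in L^1(\mathbb R^d)$, $V^-\in L^\infty$, $V(x)=V(-x)$, $V(x)=0$ for $|x|>a$, $0<a<L/2$; $V$ is periodized to $\mathbb T_L^d$ and $\hat V(k)=\int_{\mathbb T_L^d}V(x)e^{-ik\cdot x}dx$ for $k\in(2\pi/L)\mathbb Z^d$. $\mathscr V_N$ is the set of $V\in\mathscr V$ with $\hat V(k)<0$ for some $k\ne0$. $\mathscr P$ = probability densities on $\mathbb T_L^d$, $\rho_0\equiv L^{-d}$. $\mathcal F_\theta(\rho)=\int\rho\log\rho\,dx+\tfrac12\theta L^d\iint V(x-y)\rho(x)\rho(y)\,dx\,dy$ ($+\infty$ if $\rho\log\rho\notin L^1$). *)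

From HB Require Import structures.
From mathcomp Require Import all_boot all_order all_algebra.
From mathcomp Require Import all_classical all_reals all_analysis.

Set Implicit Arguments.
Unset Strict Implicit.
Unset Printing Implicit Defensive.

Import Order.TTheory GRing.Theory Num.Theory.
Import numFieldNormedType.Exports.

Local Open Scope classical_set_scope.
Local Open Scope ring_scope.

(* Points of R^d are d-tuples of reals, with the product (= Borel)
   sigma-algebra provided by MathComp-Analysis ([measurable_tuple]). *)
Section Defs.
Variable R : realType.
Variable d : nat.

Definition pt := d.-tuple R.

Definition tsub (x y : pt) : pt := [tuple tnth x i - tnth y i | i < d].
Definition topp (x : pt) : pt := [tuple - tnth x i | i < d].

Definition enorm (x : pt) : R := Num.sqrt (\sum_(i < d) tnth x i ^+ 2).

Definition dotp (k x : pt) : R := \sum_(i < d) tnth k i * tnth x i.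

Definition box (a b : pt) : set pt :=
  [set x | forall i : 'I_d, tnth a i <= tnth x i < tnth b i].

(* mu is Lebesgue measure on (the Borel sets of) R^d: it gives every box its
   volume.  Such a measure exists and is unique (boxes form a pi-system
   generating the sigma-algebra, and R^d is sigma-finite for it). *)
Definition is_lebesgue (mu : {measure set pt -> \bar R}) : Prop :=
  forall a b : pt, (forall i : 'I_d, tnth a i <= tnth b i) ->
    mu (box a b) = (\prod_(i < d) (tnth b i - tnth a i))%:E.

(* The torus T_L^d is represented by the fundamental cell [0, L)^d,
   functions on the torus by their restriction to this cell, and the
   Haar/Lebesgue measure of the torus by the restriction of mu to the cell. *)
Definition cell (L : R) : set pt :=
  [set x | forall i : 'I_d, 0 <= tnth x i < L].

Definition wrap (L t : R) : R := t - L * (Num.floor (t / L + 2^-1))%:~R.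

(* For V vanishing outside the closed
   ball of radius a < L/2 (class [V_class]) the periodization
   sum_{k in Z^d} V(z + L k) has exactly one possibly-nonzero term, namely V
   evaluated at the centred representative of z. *)
Definition Vper (L : R) (V : pt -> R) (z : pt) : R :=
  V [tuple wrap L (tnth z i) | i < d].

Definition V_class (mu : {measure set pt -> \bar R}) (L : R) (V : pt -> R)
  : Prop :=
  [/\ mu.-integrable setT (fun x => (V x)%:E),
      (exists M : R, {ae mu, forall x, - M <= V x}),
      (forall x, V x = V (topp x)) &
      exists a : R, [/\ 0 < a, a < L / 2 &
                        forall x, a < enorm x -> V x = 0]].

Definition dual_vec (L : R) (n : d.-tuple int) : pt :=
  [tuple (2 * pi / L) * (tnth n i)%:~R | i < d].

Definition hatV_re (mu : {measure set pt -> \bar R}) (L : R) (V : pt -> R)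
  (k : pt) : \bar R :=
  (\int[mu]_(x in cell L) (Vper L V x * cos (dotp k x))%:E)%E.
Definition hatV_im (mu : {measure set pt -> \bar R}) (L : R) (V : pt -> R)
  (k : pt) : \bar R :=
  (\int[mu]_(x in cell L) (- (Vper L V x * sin (dotp k x)))%:E)%E.

Definition VN_class (mu : {measure set pt -> \bar R}) (L : R) (V : pt -> R)
  : Prop :=
  V_class mu L V /\
  exists n : d.-tuple int, n != [tuple 0 | _ < d] /\
    hatV_im mu L V (dual_vec L n) = 0%E /\
    (hatV_re mu L V (dual_vec L n) < 0)%E.

Definition densities (mu : {measure set pt -> \bar R}) (L : R)
  : set (pt -> R) :=
  [set rho : pt -> R | [/\ measurable_fun (cell L) rho,
                 (forall x, cell L x -> 0 <= rho x) &
                 (\int[mu]_(x in cell L) (rho x)%:E = 1)%E]].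

Definition rho0 (L : R) : pt -> R := fun _ => (L ^+ d)^-1.

(* free energy F_theta; note [ln 0 = 0], so [0 * ln 0 = 0] *)
Definition free_energy (mu : {measure set pt -> \bar R}) (L : R)
  (V : pt -> R) (theta : R) (rho : pt -> R) : \bar R :=
  if `[< mu.-integrable (cell L) (fun x => (rho x * ln (rho x))%:E) >] then
    ((\int[mu]_(x in cell L) (rho x * ln (rho x))%:E) +
     (2^-1 * theta * L ^+ d)%:E *
      \int[mu]_(x in cell L) \int[mu]_(y in cell L)
          (Vper L V (tsub x y) * rho x * rho y)%:E)%E
  else (+oo)%E.

End Defs.

From Pilot Require Import Defs.
From HB Require Import structures.
From mathcomp Require Import all_boot all_order all_algebra.
From mathcomp Require Import all_classical all_reals all_analysis.
From mathcomp Require Import measurable_realfun zify ring lra.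

Set Implicit Arguments.
Unset Strict Implicit.
Unset Printing Implicit Defensive.

Import Order.TTheory GRing.Theory Num.Theory.
Local Open Scope classical_set_scope.
Local Open Scope ring_scope.

(* Write F_theta(rho) = S(rho) + theta L^d E(rho) / 2 with entropy S and
   interaction E.  By Gibbs' inequality S(rho) > S(rho0) = ln L^-d for every
   density rho not a.e. equal to rho0.  So F_theta_d(rho) <= F_theta_d(rho0)
   forces theta_d > 0 and E(rho) < E(rho0); since F_theta(rho) - F_theta(rho0)
   is affine in theta, it is then negative for every theta > theta_d.
   The one analytic input is that E(rho0) is finite: for x in the cell,
   y |-> wrap(x - y) maps the cell onto the centred cell [-L/2, L/2)^d
   preserving mu, so every inner integral equals L^-2d times the integral of V
   over the centred cell.  Measure preservation is checked on products of Borel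
   sets, on which mu factorises into one-dimensional Lebesgue measures (derived
   from the box formula by uniqueness of measures); in dimension one the cell
   splits into at most three pieces on each of which the map is a reflection. *)

Section product_sets.
Context (R : realType) (d : nat).
Local Notation pt := (d.-tuple R).

Definition prodset (A : 'I_d -> set R) : set pt :=
  [set x | forall i, A i (tnth x i)].

Lemma measurable_prodset (A : 'I_d -> set R) :
  (forall i, measurable (A i)) -> measurable (prodset A).
Proof.
move=> mA.
have -> : prodset A = \big[setI/setT]_(i < d) ((fun x : pt => tnth x i) @^-1` A i).
  rewrite -bigcap_seq; apply/seteqP; split=> x /= Ax i; first by move=> _; exact: Ax.
  by apply: Ax; rewrite /= mem_index_enum.
apply: bigsetI_measurable => i _.
by rewrite -[X in measurable X]setTI; apply: measurable_tnth.
Qed.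

Definition prodsets : set (set pt) :=
  [set prodset A | A in [set A | forall i, measurable (A i)]].

Lemma prodsets_setI : setI_closed prodsets.
Proof.
move=> _ _ [A mA <-] [B mB <-]; exists (fun i => A i `&` B i).
  by move=> i; apply: measurableI.
by apply/seteqP; split=> x /=; [move=> AB; split=> i; case: (AB i)|move=> [] ].
Qed.

Lemma measurable_prodsets : (measurable : set (set pt)) = <<s prodsets >>.
Proof.
apply/seteqP; split=> X.
  apply: smallest_sub; first exact: smallest_sigma_algebra.
  move=> Y; rewrite -bigcup_seq => -[i _ [B mB <-]].
  apply: sub_sigma_algebra; exists (fun j => if j == i then B else setT).
    by move=> j; case: ifP.
  apply/seteqP; split=> x /=; first by move=> /(_ i); rewrite eqxx.
  by move=> [_ Bx] j; case: ifPn => // /eqP ->.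
apply: smallest_sub; first exact: sigma_algebra_measurable.
by move=> _ [A mA <-]; exact: measurable_prodset.
Qed.

End product_sets.

Section lebesgue_line.
Context (R : realType).
Local Notation lam := (@lebesgue_measure R).

Lemma lebesgue_measure_co (a b : R) : a <= b -> lam `[a, b[ = (b - a)%:E.
Proof.
move=> ab; rewrite lebesgue_measure_itv /= lte_fin.
by case: ltgtP ab => // -> _; rewrite subrr.
Qed.

Lemma measurable_reflect (b : R) (A : set R) : measurable A ->
  measurable ((fun y => b - y) @^-1` A).
Proof.
move=> mA; rewrite -[X in measurable X]setTI.
exact: (measurable_funB (measurable_cst _) (@measurable_id _ _ _)).
Qed.

Lemma lebesgue_measure_reflect (b : R) (A : set R) : measurable A ->
  lam ((fun y => b - y) @^-1` A) = lam A.
Proof.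
move=> mA; pose T := measurableTypeR R.
have mf : measurable_fun (setT : set T) ((fun y => b - y) : T -> T).
  exact: measurable_funB.
apply/esym/(@lebesgue_measure_unique R
  (pushforward lam ((fun y => b - y) : T -> T))) => //.
move=> _ [[s t] _ <-]; rewrite /pushforward /=.
transitivity (lam `[b - t, b - s[%classic); last first.
  congr (lam _); apply/seteqP; split=> y; rewrite /= !in_itv /=.
    by move=> /andP[? ?]; apply/andP; split; lra.
  by move=> /andP[? ?]; apply/andP; split; lra.
rewrite !lebesgue_measure_itv /= !lte_fin.
have -> : (b - t < b - s) = (s < t) by apply/idP/idP; lra.
by case: ifP => // _; congr (_%:E); lra.
Qed.

Lemma setI_ray_co (r s t : R) : s <= t ->
  `[r, +oo[ `&` `[s, t[ = `[Num.min (Num.max r s) t, t[%classic.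
Proof.
move=> st; apply/seteqP; split=> z /=; rewrite !in_itv /= ?andbT.
  by move=> [rz /andP[sz ->]]; rewrite andbT ge_min ge_max rz sz.
move=> /andP[+ zt]; rewrite zt ge_min ge_max => /orP[/andP[-> ->] //|tz].
by move: zt; rewrite ltNge tz.
Qed.

Lemma lebesgue_measure_setI_co_fin (A : set R) (s t : R) :
  measurable A -> s <= t -> lam (A `&` `[s, t[) \is a fin_num.
Proof.
move=> mA st; rewrite ge0_fin_numE ?measure_ge0 //.
apply: (@le_lt_trans _ _ (t - s)%:E); last exact: ltry.
rewrite -lebesgue_measure_co //; apply: le_measure; rewrite ?inE //.
by apply: measurableI => //; exact: measurable_itv.
Qed.

Lemma measure_unique_rays (m1 m2 : {measure set (measurableTypeR R) -> \bar R}) :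
  (m1 setT < +oo)%E -> (forall r : R, m1 `[r, +oo[%classic = m2 `[r, +oo[%classic) ->
  forall A, measurable A -> m1 A = m2 A.
Proof.
move=> m1_fin m1m2 A mA.
apply: (@measure_unique _ R (measurableTypeR R) (RGenCInfty.G (R:=R))
  (fun n => `[-(n%:R), +oo[%classic) (RGenCInfty.measurableE R) _ _ _ m1 m2) => //.
- move=> _ _ [x ->] [y ->]; exists (Num.max x y).
  apply/seteqP; split=> z /=; rewrite !in_itv /= !andbT ge_max; first by move=> [-> ->].
  by move=> /andP[].
- by move=> n; exists (1 *- n).
- apply/seteqP; split => // x _; exists (Num.Def.archi_bound (- x)) => //=.
  by rewrite in_itv /= andbT lerNl; exact: ltW (unstable.ltr_bound _).
- by move=> _ [r ->]; exact: m1m2.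
- by move=> n; apply: le_lt_trans m1_fin; apply: le_measure; rewrite ?inE.
Qed.

End lebesgue_line.

Lemma int_between_m2_2 {R : realType} (k : int) : -2 < (k%:~R : R) < 2 ->
  [set -1; 0; 1] k.
Proof.
move=> /andP[k_gt k_lt].
have : (-2 < k)%R by rewrite -(ltr_int R).
have : (k < 2)%R by rewrite -(ltr_int R).
rewrite /=; lia.
Qed.

Section wrap.
Context (R : realType) (L : R).
Local Notation lam := (@lebesgue_measure R).
Local Notation wrap := (Defs.wrap L).

Lemma wrap_centred (t : R) : 0 < L -> -(L/2) <= wrap t < L/2.
Proof.
move=> L_gt0; rewrite /Defs.wrap; have := floor_itv (t / L + 2^-1).
set m := Num.floor _; rewrite intrD /=.
have tE : t = (t / L) * L by rewrite divfK // gt_eqF.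
set v := t / L in tE *; move=> /andP[? ?]; rewrite tE; apply/andP; split; nra.
Qed.

Lemma wrap_shift (t : R) (k : int) : 0 < L -> -(L/2) <= t + k%:~R * L < L/2 ->
  wrap t = t + k%:~R * L.
Proof.
move=> L_gt0 /andP[t_ge t_lt]; rewrite /Defs.wrap.
have -> : Num.floor (t / L + 2^-1) = - k.
  apply: floor_def; rewrite intrD intrN /=.
  have tE : t = (t / L) * L by rewrite divfK // gt_eqF.
  set v := t / L in tE *; set K : R := k%:~R in t_ge t_lt *.
  rewrite tE in t_ge t_lt; apply/andP; split; nra.
by rewrite intrN mulrN opprK mulrC.
Qed.

Lemma measurable_wrap : measurable_fun setT wrap.
Proof.
apply: measurable_funB => //; apply: measurable_funM => //.
rewrite (_ : (fun t => _) =
  (fun t : R => (Num.floor t)%:~R) \o (fun t => t / L + 2^-1)) //.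
apply: measurableT_comp.
  by apply: nondecreasing_measurable => // s t st; rewrite ler_int le_floor.
by apply: measurable_funD => //; exact: mulrr_measurable.
Qed.

Lemma eq_int_of_shift_close (k j : int) : 0 < L ->
  -L < k%:~R * L - j%:~R * L < L -> k = j.
Proof.
move=> L_gt0 /andP[? ?].
have /andP[lo hi] : -1 < ((k - j)%:~R : R) < 1.
  by rewrite intrB; apply/andP; split; nra.
have : (-1 < k - j)%R by rewrite -(ltr_int R).
have : (k - j < 1)%R by rewrite -(ltr_int R).
lia.
Qed.

Definition period_window (x : R) (k : int) : set R :=
  `]x + k%:~R * L - L, x + k%:~R * L].

Lemma trivIset_period_window (x : R) : 0 < L -> trivIset setT (period_window x).
Proof.
move=> L_gt0; apply/trivIsetP => k j _ _ /eqP kj.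
apply/seteqP; split => // z []; rewrite /period_window /= !in_itv /=.
move=> /andP[? ?] /andP[? ?].
by apply: kj; apply: eq_int_of_shift_close => //; apply/andP; split; lra.
Qed.

Lemma centred_bigcup_period_window (x : R) (A : set R) : 0 < L -> 0 <= x < L ->
  `[-(L/2), L/2[ `&` A =
  \bigcup_(k in [set -1; 0; 1]) (period_window x k `&` (`[-(L/2), L/2[ `&` A)).
Proof.
move=> L_gt0 /andP[? ?]; apply/seteqP; split => [z Bz|z [k _ []] //].
have := ceil_itv ((z - x) / L); set m := Num.ceil _.
have zE : z - x = ((z - x) / L) * L by rewrite divfK // gt_eqF.
set v := (z - x) / L in zE *; rewrite intrB => /andP[? ?].
have /andP[? ?] : -(L/2) <= z < L/2 by case: Bz; rewrite /= in_itv.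
exists m; first by apply: (@int_between_m2_2 R); apply/andP; split; nra.
by split => //; rewrite /period_window /= in_itv /=; apply/andP; split; nra.
Qed.

(* On the k-th piece, [y |-> wrap (x - y)] is the reflection [y |-> x + k L - y]. *)
Lemma cell_preimage_wrap_bigcup (x : R) (A : set R) : 0 < L -> 0 <= x < L ->
  `[0, L[ `&` (fun y => wrap (x - y)) @^-1` A =
  \bigcup_(k in [set -1; 0; 1])
    ((fun y => x + k%:~R * L - y) @^-1` (period_window x k `&` (`[-(L/2), L/2[ `&` A))).
Proof.
move=> L_gt0 /andP[? ?]; apply/seteqP; split => y /=.
  rewrite in_itv /= => -[/andP[? ?] Ay].
  have := floor_itv ((x - y) / L + 2^-1); set m := Num.floor _.
  have yE : x - y = ((x - y) / L) * L by rewrite divfK // gt_eqF.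
  set v := (x - y) / L in yE *; rewrite intrD => /andP[? ?].
  have wE : wrap (x - y) = x + (- m)%:~R * L - y.
    by rewrite /Defs.wrap -/v -/m intrN; ring.
  exists (- m).
    by apply: (@int_between_m2_2 R); rewrite intrN; apply/andP; split; nra.
  rewrite /period_window /= !in_itv /= -wE.
  split; last by split => //; exact: wrap_centred.
  by apply/andP; split; lra.
move=> [k _]; rewrite /period_window /= !in_itv /= => -[/andP[? ?] [? ?]].
have -> : wrap (x - y) = x + k%:~R * L - y by rewrite (wrap_shift (k := k)) // addrAC.
by split => //; apply/andP; split; lra.
Qed.

Lemma lebesgue_measure_wrap_sub (x : R) (A : set R) : 0 < L -> 0 <= x < L ->
  measurable A ->
  lam (`[0, L[ `&` (fun y => wrap (x - y)) @^-1` A) = lam (`[-(L/2), L/2[ `&` A).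
Proof.
move=> L_gt0 x_cell mA.
pose Q k := period_window x k `&` (`[-(L/2), L/2[ `&` A).
have mQ k : measurable (Q k).
  by apply: measurableI; [exact: measurable_itv | exact: measurableI].
rewrite (cell_preimage_wrap_bigcup A L_gt0 x_cell).
rewrite [in RHS](centred_bigcup_period_window A L_gt0 x_cell).
rewrite !measure_fin_bigcup; last 6 first.
- exact: finite_set3.
- exact/sub_trivIset/trivIset_setIr/trivIset_period_window.
- by move=> k _; exact: mQ.
- exact: finite_set3.
- apply/trivIsetP => k j _ _ /eqP kj; apply/seteqP; split => // y.
  move=> [[_ [+ _]] [_ [+ _]]]; rewrite /= !in_itv /= => /andP[? ?] /andP[? ?].
  by apply: kj; apply: eq_int_of_shift_close => //; apply/andP; split; lra.
- by move=> k _; apply: measurable_reflect; exact: mQ.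
by apply: eq_fsbigr => k _; exact: lebesgue_measure_reflect (mQ k).
Qed.

End wrap.

Section lebesgue_tuple.
Context (R : realType) (d : nat) (mu : {measure set (d.-tuple R) -> \bar R}).
Hypothesis mu_box : is_lebesgue mu.
Local Notation pt := (d.-tuple R).
Local Notation lam := (@lebesgue_measure R).
Local Notation co a b i := `[tnth a i, tnth b i[%classic.

Lemma box_prodset (a b : pt) : box a b = prodset (fun i => co a b i).
Proof. by apply/seteqP; split=> x /= h i; have := h i; rewrite /= in_itv. Qed.

(* Induction on the number [k] of factors that are not plain intervals.  In a
   step both sides, as functions of the [k]-th factor, are measures on R; on a
   ray [`[r, +oo[] that factor is again an interval, so the induction
   hypothesis (for a box with a moved corner) shows that they agree there. *)
Let prodset_formula k := forall (a b : pt) (A : 'I_d -> set R),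
  (forall i, tnth a i <= tnth b i) -> (forall i, measurable (A i)) ->
  (forall i : 'I_d, (k <= i)%N -> A i = setT) ->
  mu (prodset (fun i => A i `&` co a b i)) = (\prod_(i < d) lam (A i `&` co a b i))%E.

Let prodset_formula0 : prodset_formula 0.
Proof.
move=> a b A ab _ AT.
under eq_fun do rewrite AT // setTI.
under eq_bigr do rewrite AT // setTI.
rewrite -box_prodset mu_box // -prodEFin; apply: eq_bigr => i _.
by rewrite lebesgue_measure_co.
Qed.

Let prodset_ray k (kd : (k < d)%N) : prodset_formula k ->
  forall (a b : pt) (A : 'I_d -> set R), (forall i, tnth a i <= tnth b i) ->
  (forall i, measurable (A i)) -> (forall i : 'I_d, (k <= i)%N -> A i = setT) ->
  forall r, mu (prodset (fun i => A i `&` co a b i) `&`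
                (fun x : pt => tnth x (Ordinal kd)) @^-1` `[r, +oo[) =
  (lam (`[r, +oo[ `&` co a b (Ordinal kd)) *
   \prod_(i < d | i != Ordinal kd) lam (A i `&` co a b i))%E.
Proof.
move=> IH a b A ab mA AT r; set kk := Ordinal kd.
pose a' : pt := [tuple if i == kk then Num.min (Num.max r (tnth a kk)) (tnth b kk)
                       else tnth a i | i < d].
have co_a' i : co a' b i = if i == kk then `[r, +oo[ `&` co a b kk else co a b i.
  rewrite tnth_mktuple; case: eqP => [->|//]; by rewrite setI_ray_co.
have a'b i : tnth a' i <= tnth b i.
  by rewrite tnth_mktuple; case: eqP => // ->; rewrite ge_min lexx orbT.
have AkT : A kk = setT by exact: AT.
rewrite (_ : _ `&` _ = prodset (fun i => A i `&` co a' b i)); last first.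
  apply/seteqP; split=> x /=.
    move=> [Ax rx] i; rewrite co_a'; case: eqP => [->|//].
    by rewrite AkT; split => //; split => //; case: (Ax kk).
  move=> Ax; have := Ax kk; rewrite co_a' eqxx => -[Akx [rx cox]].
  split=> // i; have := Ax i; rewrite co_a'; case: eqP => [->|//] _.
  exact: (conj Akx cox).
rewrite (IH a' b A a'b mA AT) (bigD1 kk) //= co_a' eqxx AkT setTI.
by congr (_ * _)%E; apply: eq_bigr => i ik; rewrite co_a' (negbTE ik).
Qed.

Let prodset_slice k (kd : (k < d)%N) : prodset_formula k ->
  forall (a b : pt) (A : 'I_d -> set R), (forall i, tnth a i <= tnth b i) ->
  (forall i, measurable (A i)) -> (forall i : 'I_d, (k <= i)%N -> A i = setT) ->
  forall E : set R, measurable E ->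
  mu (prodset (fun i => A i `&` co a b i) `&`
      (fun x : pt => tnth x (Ordinal kd)) @^-1` E) =
  (lam (E `&` co a b (Ordinal kd)) *
   \prod_(i < d | i != Ordinal kd) lam (A i `&` co a b i))%E.
Proof.
move=> IH a b A ab mA AT E mE; set kk := Ordinal kd.
pose Z := prodset (fun i => A i `&` co a b i).
have mZ : measurable Z.
  by apply: measurable_prodset => i; apply: measurableI => //; exact: measurable_itv.
pose c := (\prod_(i < d | i != kk) lam (A i `&` co a b i))%E.
have c_fin : c \is a fin_num.
  by apply: prode_fin_num => i _; exact: lebesgue_measure_setI_co_fin.
have c_ge0 : (0 <= fine c)%R.
  by apply: fine_ge0; apply: prode_ge0 => i _; exact: measure_ge0.
pose T := measurableTypeR R.
pose I : set T := co a b kk.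
have mI : measurable I by exact: measurable_itv.
have mx : measurable_fun setT ((fun x : pt => tnth x kk) : pt -> T).
  exact: measurable_tnth.
rewrite -/c -(fineK c_fin) muleC setIC.
rewrite -[LHS]/(pushforward (mrestr mu mZ) ((fun x : pt => tnth x kk) : pt -> T) E).
have := @measure_unique_rays R
  (pushforward (mrestr mu mZ) ((fun x : pt => tnth x kk) : pt -> T))
  (mscale (NngNum c_ge0) (mrestr lam mI)).
apply=> // [|r].
- change (mu ((fun x : pt => tnth x kk) @^-1` setT `&` Z) < +oo)%E.
  rewrite preimage_setT setTI; apply: (@le_lt_trans _ _ (mu (box a b))).
    apply: le_measure; rewrite ?inE //; last by move=> x Zx i; case: (Zx i).
    by rewrite box_prodset; apply: measurable_prodset => i; exact: measurable_itv.
  by rewrite mu_box // ltry.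
- change (mu ((fun x : pt => tnth x kk) @^-1` `[r, +oo[ `&` Z) =
          (fine c)%:E * lam (`[r, +oo[ `&` I))%E.
  by rewrite setIC (prodset_ray kd IH ab mA AT) fineK // muleC.
Qed.

Let prodset_formulaS k : (k < d)%N -> prodset_formula k -> prodset_formula k.+1.
Proof.
move=> kd IH a b A ab mA AT; set kk := Ordinal kd.
pose A0 i := if i == kk then setT else A i.
have mA0 i : measurable (A0 i) by rewrite /A0; case: ifP.
have A0T (i : 'I_d) : (k <= i)%N -> A0 i = setT.
  rewrite /A0; case: eqP => // /eqP ik ki; apply: AT.
  by rewrite ltn_neqAle ki andbT; apply: contra ik => /eqP ki'; apply/eqP/val_inj.
have -> : prodset (fun i => A i `&` co a b i) =
    prodset (fun i => A0 i `&` co a b i) `&` (fun x : pt => tnth x kk) @^-1` A kk.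
  apply/seteqP; split=> x /=.
    move=> Ax; split=> [i|]; last by case: (Ax kk).
    by rewrite /A0; case: eqP => [->|_]; [case: (Ax kk)|exact: Ax].
  move=> [Zx Akx] i; have := Zx i; rewrite /A0; case: eqP => [->|//] [_ ?].
  exact: (conj Akx _).
rewrite (prodset_slice kd IH ab mA0 A0T (mA kk)) [RHS](bigD1 kk) //=.
by congr (_ * _)%E; apply: eq_bigr => i ik; rewrite /A0 (negbTE ik).
Qed.

Lemma measure_prodset (a b : pt) (A : 'I_d -> set R) :
  (forall i, tnth a i <= tnth b i) -> (forall i, measurable (A i)) ->
  mu (prodset (fun i => A i `&` co a b i)) = (\prod_(i < d) lam (A i `&` co a b i))%E.
Proof.
move=> ab mA; suff : prodset_formula d by apply => // i; rewrite leqNgt ltn_ord.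
have : (d <= d)%N by [].
elim: {-2}d => [|k IH] kd; first exact: prodset_formula0.
exact: prodset_formulaS kd (IH (ltnW kd)).
Qed.

End lebesgue_tuple.

Section torus_translation.
Context (R : realType) (d : nat) (mu : {measure set (d.-tuple R) -> \bar R}) (L : R).
Hypothesis mu_box : is_lebesgue mu.
Hypothesis L_gt0 : 0 < L.
Local Notation pt := (d.-tuple R).
Local Notation cst_pt c := [tuple c | _ < d].

Definition centred_cell : set pt := prodset (fun _ => `[-(L/2), L/2[%classic).

Definition wrap_sub (x y : pt) : pt := [tuple Defs.wrap L (tnth x i - tnth y i) | i < d].

Lemma Vper_tsub (V : pt -> R) (x y : pt) : Vper L V (tsub x y) = V (wrap_sub x y).
Proof. by congr V; apply: eq_mktuple => i; rewrite tnth_mktuple. Qed.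

Lemma cell_prodset : cell L = prodset (fun _ => `[0, L[%classic) :> set pt.
Proof. by apply/seteqP; split=> x /= h i; have := h i; rewrite /= in_itv. Qed.

Lemma measurable_cell : measurable (cell L : set pt).
Proof.
by rewrite cell_prodset; apply: measurable_prodset => i; exact: measurable_itv.
Qed.

Lemma measurable_centred_cell : measurable centred_cell.
Proof. by apply: measurable_prodset => i; exact: measurable_itv. Qed.

Lemma measure_cell : mu (cell L) = (L ^+ d)%:E.
Proof.
have -> : cell L = box (cst_pt 0) (cst_pt L).
  by apply/seteqP; split=> x /= h i; have := h i; rewrite !tnth_mktuple.
rewrite mu_box => [|i]; last by rewrite !tnth_mktuple; exact: ltW.
congr (_%:E); under eq_bigr do rewrite !tnth_mktuple subr0.
by rewrite prodr_const card_ord.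
Qed.

Lemma wrap_sub_centred (x y : pt) : centred_cell (wrap_sub x y).
Proof. by move=> i; rewrite tnth_mktuple /= in_itv; exact: wrap_centred. Qed.

Lemma measurable_wrap_sub (x : pt) : measurable_fun setT (wrap_sub x).
Proof.
apply/measurable_fun_tnthP => i.
rewrite (_ : _ \o _ = Defs.wrap L \o (fun y : pt => tnth x i - tnth y i)).
  apply: measurableT_comp; first exact: measurable_wrap.
  by apply: measurable_funB => //; exact: measurable_tnth.
by apply: funext => y /=; rewrite tnth_mktuple.
Qed.

Lemma measure_cell_wrap_sub_prodset (x : pt) (B : 'I_d -> set R) : cell L x ->
  (forall i, measurable (B i)) ->
  mu (cell L `&` wrap_sub x @^-1` prodset B) = mu (centred_cell `&` prodset B).
Proof.
move=> x_cell mB.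
pose A1 i := (fun y => Defs.wrap L (tnth x i - y)) @^-1` B i.
have mA1 i : measurable (A1 i).
  have := measurable_reflect (tnth x i) (@measurable_wrap R L measurableT _ (mB i)).
  by rewrite setTI.
rewrite [in LHS](_ : _ `&` _ = prodset (fun i => A1 i `&`
    `[tnth (cst_pt 0) i, tnth (cst_pt L) i[%classic)); last first.
  apply/seteqP; split=> y /=.
    move=> [y_cell By] i; split; first by have := By i; rewrite tnth_mktuple.
    by rewrite /= !tnth_mktuple in_itv; exact: y_cell.
  by move=> Ay; split=> i; have [A1y] := Ay i; rewrite /= !tnth_mktuple ?in_itv.
rewrite [in RHS](_ : _ `&` _ = prodset (fun i => B i `&`
    `[tnth (cst_pt (-(L/2))) i, tnth (cst_pt (L/2)) i[%classic)); last first.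
  apply/seteqP; split=> y /=.
    by move=> [yc By] i; rewrite !tnth_mktuple; split; [exact: By|exact: yc].
  by move=> By; split=> i; have [] := By i; rewrite !tnth_mktuple.
rewrite !(measure_prodset mu_box) //; last 2 first.
- by move=> i; rewrite !tnth_mktuple; have := L_gt0; lra.
- by move=> i; rewrite !tnth_mktuple; exact: ltW.
apply: eq_bigr => i _; rewrite !tnth_mktuple setIC.
by rewrite (lebesgue_measure_wrap_sub L_gt0 (x_cell i) (mB i)) setIC.
Qed.

Lemma measure_cell_wrap_sub (x : pt) (A : set pt) : cell L x -> measurable A ->
  mu (cell L `&` wrap_sub x @^-1` A) = mu (centred_cell `&` A).
Proof.
move=> x_cell mA; have mT := measurable_wrap_sub x.
rewrite setIC [in RHS]setIC.
rewrite -[LHS]/(pushforward (mrestr mu measurable_cell) (wrap_sub x) A).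
rewrite -[RHS]/(mrestr mu measurable_centred_cell A).
have := @measure_unique _ R pt (@prodsets R d) (fun _ => setT) (@measurable_prodsets R d)
  (@prodsets_setI R d) _ _ (pushforward (mrestr mu measurable_cell) (wrap_sub x))
  (mrestr mu measurable_centred_cell).
apply=> //.
- by move=> _; exists (fun _ => setT) => //; apply/seteqP.
- by apply/seteqP; split=> // y _; exists 0%N.
- move=> _ [B mB <-].
  change (mu (wrap_sub x @^-1` prodset B `&` cell L) = mu (prodset B `&` centred_cell)).
  by rewrite setIC [in RHS]setIC measure_cell_wrap_sub_prodset.
- move=> _; change (mu (wrap_sub x @^-1` setT `&` cell L) < +oo)%E.
  by rewrite preimage_setT setTI measure_cell ltry.
Qed.

Lemma ge0_integral_cell_wrap_sub (x : pt) (f : pt -> \bar R) : (0 < d)%N ->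
  cell L x -> measurable_fun setT f -> (forall y, 0 <= f y)%E ->
  (\int[mu]_(y in cell L) f (wrap_sub x y) = \int[mu]_(y in centred_cell) f y)%E.
Proof.
move=> d_gt0 x_cell mf f_ge0.
have off : ~ centred_cell (cst_pt L).
  move=> /(_ (Ordinal d_gt0)); rewrite tnth_mktuple /= in_itv /= => /andP[_].
  by have := L_gt0; lra.
(* [T] extends [wrap_sub x] off the cell by a point outside the centred cell,
   so that [T @^-1` A = cell L `&` wrap_sub x @^-1` A] when [A] lies inside it. *)
pose T y := if y \in (cell L : set pt) then wrap_sub x y else cst_pt L.
have mT : measurable_fun setT T.
  apply: measurable_fun_ifT; last 2 first.
  - exact: measurable_wrap_sub.
  - exact: measurable_cst.
  apply: (measurable_fun_bool true); rewrite setTI.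
  rewrite (_ : _ @^-1` _ = cell L); first exact: measurable_cell.
  by apply/seteqP; split=> y /=; [move/set_mem|move/mem_set].
have T_cell : T @^-1` centred_cell = cell L.
  apply/seteqP; split=> y; rewrite /T /=; first by case: ifPn => [/set_mem|_ /off].
  by move=> y_cell; rewrite mem_set //; exact: wrap_sub_centred.
rewrite (eq_integral (f \o T)) => [|y /set_mem y_cell]; last by rewrite /= /T mem_set.
rewrite -T_cell -ge0_integral_pushforward; last 4 first.
- exact: mT.
- exact: measurable_centred_cell.
- exact: measurable_funS mf.
- by move=> y _; exact: f_ge0.
apply: eq_measure_integral => A mA A_centred.
change (mu (T @^-1` A) = mu A).
rewrite (_ : T @^-1` A = cell L `&` wrap_sub x @^-1` A).
  by rewrite measure_cell_wrap_sub // setIidr.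
apply/seteqP; split=> y /=; rewrite /T; last by move=> [/mem_set ->].
by case: ifPn => [/set_mem|_ /A_centred /off].
Qed.

Lemma integral_cell_wrap_sub (x : pt) (f : pt -> R) : (0 < d)%N ->
  cell L x -> measurable_fun setT f ->
  (\int[mu]_(y in cell L) (f (wrap_sub x y))%:E =
   \int[mu]_(y in centred_cell) (f y)%:E)%E.
Proof.
move=> d_gt0 x_cell mf.
have mF : measurable_fun setT (fun y => (f y)%:E) by exact/measurable_EFinP.
rewrite integralE [RHS]integralE.
have -> : (fun y => (f (wrap_sub x y))%:E) = (fun y => (f y)%:E) \o wrap_sub x by [].
rewrite funepos_comp funeneg_comp.
have := ge0_integral_cell_wrap_sub d_gt0 x_cell (measurable_funepos mF) (funepos_ge0 _).
have := ge0_integral_cell_wrap_sub d_gt0 x_cell (measurable_funeneg mF) (funeneg_ge0 _).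
by move=> /= -> ->.
Qed.

End torus_translation.

Section gibbs.
Context (R : realType).

Lemma xlnx_bregman_ge0 (x c : R) : 0 <= x -> 0 < c ->
  0 <= x * ln x - x * ln c - x + c.
Proof.
move=> x_ge0 c_gt0; have [->|x_neq0] := eqVneq x 0; first by rewrite !mul0r; lra.
have x_gt0 : 0 < x by rewrite lt_neqAle eq_sym x_neq0.
rewrite -[c](@divfK _ x) ?gt_eqF // lnM ?posrE ?divr_gt0 //.
have := expR_ge1Dx (ln (c / x)); rewrite lnK ?posrE ?divr_gt0 // => le_ln.
by rewrite (mulrC _ x); nra.
Qed.

Lemma xlnx_bregman_eq0 (x c : R) : 0 <= x -> 0 < c ->
  x * ln x - x * ln c - x + c = 0 -> x = c.
Proof.
move=> x_ge0 c_gt0; have [->|x_neq0] := eqVneq x 0; first by rewrite !mul0r; lra.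
have x_gt0 : 0 < x by rewrite lt_neqAle eq_sym x_neq0.
pose t := c / x; have t_gt0 : 0 < t by rewrite divr_gt0.
have cE : c = x * t by rewrite /t mulrC divfK ?gt_eqF.
rewrite cE lnM ?posrE //.
have -> : x * ln x - x * (ln x + ln t) - x + x * t = x * (t - 1 - ln t) by ring.
move=> /eqP; rewrite mulf_eq0 gt_eqF //= => /eqP lnE.
suff : t = 1 by move=> ->; rewrite mulr1.
have [lnt0|lnt_neq0] := eqVneq (ln t) 0.
  by move/eqP: lnt0; rewrite ln_eq0 // => /eqP.
by have := expR_gt1Dx lnt_neq0; rewrite lnK ?posrE //; lra.
Qed.

End gibbs.

Section entropy.
Local Open Scope ereal_scope.
Context d (T : measurableType d) (R : realType) (mu : {measure set T -> \bar R}).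
Variables (D : set T) (m : R).
Hypotheses (mD : measurable D) (m_gt0 : (0 < m)%R) (muD : mu D = m%:E).
Lemma integrable_cst_finite (k : R) : mu.-integrable D (fun _ => k%:E).
Proof.
apply/integrableP; split; first exact: measurable_cst.
by rewrite integral_cst // muD -EFinM ltry.
Qed.

Variable rho : T -> R.
Hypotheses (mrho : measurable_fun D rho) (rho_ge0 : forall x, D x -> (0 <= rho x)%R).
Hypothesis rho1 : \int[mu]_(x in D) (rho x)%:E = 1.
Hypothesis ient : mu.-integrable D (fun x => (rho x * ln (rho x))%:E).

Local Notation bregman x :=
  (rho x * ln (rho x) - rho x * ln m^-1 - rho x + m^-1)%R.

Let integral_bregman :
  \int[mu]_(x in D) (bregman x)%:E =
  \int[mu]_(x in D) (rho x * ln (rho x))%:E - (ln m^-1)%:E.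
Proof.
have irho : mu.-integrable D (fun x => (rho x)%:E).
  apply/integrableP; split; first exact/measurable_EFinP.
  rewrite (eq_integral (fun x => (rho x)%:E)) ?rho1 ?ltry //.
  by move=> x /set_mem Dx; rewrite gee0_abs // lee_fin rho_ge0.
have ilin : mu.-integrable D (fun x => ((- ln m^-1 - 1) * rho x)%:E).
  by under eq_fun do rewrite EFinM; exact: integrableZl.
have bregmanE x : (bregman x)%:E = (rho x * ln (rho x))%:E +
    (((- ln m^-1 - 1) * rho x)%:E + (m^-1)%:E).
  by rewrite -!EFinD; congr (_%:E); ring.
under eq_integral do rewrite bregmanE.
rewrite integralD //; last exact/integrableD/integrable_cst_finite.
rewrite integralD //; last exact: integrable_cst_finite.
rewrite [X in _ + (X + _)](_ : _ = (- ln m^-1 - 1)%:E * \int[mu]_(x in D) (rho x)%:E).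
  rewrite rho1 mule1 integral_cst // muD -EFinM mulVf ?gt_eqF //.
  have := integrable_fin_num mD ient; case: (\int[mu]_(x in D) _) => // s _.
  by rewrite -!EFinD; congr (_%:E); ring.
by rewrite -integralZl //; apply: eq_integral => x _; rewrite EFinM.
Qed.

Lemma entropy_gt_uniform : ~ {ae mu, forall x, D x -> rho x = (m^-1)%R} ->
  (ln m^-1)%:E < \int[mu]_(x in D) (rho x * ln (rho x))%:E.
Proof.
move=> rho_neq; rewrite ltNge; apply/negP => S_le; apply: rho_neq.
have m_inv_gt0 : (0 < m^-1)%R by rewrite invr_gt0.
have bregman_ge0 x : D x -> (0 <= bregman x)%R.
  by move=> Dx; apply: xlnx_bregman_ge0 => //; exact: rho_ge0.
have mbregman : measurable_fun D (fun x => (bregman x)%:E).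
  apply/measurable_EFinP; apply: measurable_funD => //; apply: measurable_funB => //.
  apply: measurable_funB; first exact/measurable_EFinP/(measurable_int _ ient).
  exact: measurable_funM.
have : \int[mu]_(x in D) `|(bregman x)%:E| = 0.
  apply/eqP; rewrite eq_le; apply/andP; split; last exact: integral_ge0.
  under eq_integral => x /set_mem Dx do rewrite gee0_abs ?lee_fin ?bregman_ge0 //.
  rewrite integral_bregman; move: S_le; have := integrable_fin_num mD ient.
  by case: (\int[mu]_(x in D) _) => // s _; rewrite !lee_fin subr_le0.
move/(ae_eq_integral_abs mu mD mbregman); apply: filterS => x bregman0 Dx.
apply: xlnx_bregman_eq0 => //; first exact: rho_ge0.
by have /eqP := bregman0 Dx; rewrite eqe => /eqP.
Qed.

End entropy.

Lemma affine_energy_crossing {R : realType} (S0 S e0 a b : R) (E : \bar R) :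
  0 <= a -> a < b -> S0 < S ->
  (S%:E + a%:E * E <= S0%:E + a%:E * e0%:E)%E ->
  (S%:E + b%:E * E < S0%:E + b%:E * e0%:E)%E.
Proof.
move=> a_ge0 ab SS0; rewrite -!EFinM -!EFinD; case: E => [r| |].
- rewrite -EFinM -EFinD !lee_fin lte_fin => le_a.
  have : 0 < e0 - r by nra.
  nra.
- have [->|a_neq0] := eqVneq a 0.
    by rewrite mul0e adde0 mul0r addr0 lee_fin leNgt SS0.
  by rewrite mulry gtr0_sg ?lt_neqAle 1?eq_sym ?a_neq0 // mul1e addey // leye_eq.
- move=> _; rewrite mulrNy gtr0_sg ?mul1e ?addeNy ?ltNyr //.
  exact: le_lt_trans a_ge0 ab.
Qed.

Section uniform_density.
Context (R : realType) (d : nat) (mu : {measure set (d.-tuple R) -> \bar R}) (L : R).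
Context (V : d.-tuple R -> R).
Hypotheses (mu_box : is_lebesgue mu) (L_gt0 : 0 < L) (d_gt0 : (0 < d)%N).
Hypothesis iV : mu.-integrable setT (fun x => (V x)%:E).
Local Notation c := ((L ^+ d)^-1).

Lemma integrable_uniform_entropy :
  mu.-integrable (cell L) (fun x => (rho0 L x * ln (rho0 L x))%:E).
Proof.
rewrite /rho0.
exact: integrable_cst_finite (measurable_cell L) (measure_cell mu_box L_gt0) _.
Qed.

Lemma uniform_entropy :
  (\int[mu]_(x in cell L) (rho0 L x * ln (rho0 L x))%:E)%E = (ln c)%:E.
Proof.
rewrite /rho0 integral_cst; last exact: measurable_cell.
rewrite (measure_cell mu_box L_gt0) -EFinM; congr (_%:E).
by rewrite mulrAC mulVf ?mul1r // gt_eqF // exprn_gt0.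
Qed.

Lemma uniform_interaction_fin_num :
  (\int[mu]_(x in cell L) \int[mu]_(y in cell L)
     (Vper L V (tsub x y) * rho0 L x * rho0 L y)%:E)%E \is a fin_num.
Proof.
have mV : measurable_fun setT V.
  by apply/measurable_EFinP; exact: measurable_int iV.
have icV : mu.-integrable (centred_cell L) (fun z => (c * c * V z)%:E).
  under eq_fun do rewrite EFinM.
  apply: integrableZl; first exact: measurable_centred_cell.
  exact: integrableS (measurable_centred_cell L) (@subsetT _ _) iV.
have e_fin := integrable_fin_num (measurable_centred_cell L) icV.
rewrite (eq_integral (cst (\int[mu]_(z in centred_cell L) (c * c * V z)%:E)%E)).
  rewrite integral_cst; last exact: measurable_cell.
  by rewrite (measure_cell mu_box L_gt0) fin_numM.
move=> x /set_mem x_cell /=; rewrite -(integral_cell_wrap_sub mu_box L_gt0 d_gt0 x_cell).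
  by apply: eq_integral => y _; rewrite Vper_tsub /rho0 -mulrA mulrC.
by apply: measurable_funM => //; exact: measurable_cst.
Qed.

End uniform_density.

Theorem proposition2p5 (R : realType) (d : nat)
  (mu : {measure set (d.-tuple R) -> \bar R}) (L : R) (V : d.-tuple R -> R)
  (theta_d : R) :
  (0 < d)%N -> is_lebesgue mu -> 0 < L -> VN_class mu L V -> 0 <= theta_d ->
  (exists rho, densities mu L rho /\
     ~ {ae mu, forall x, cell L x -> rho x = @rho0 R d L x} /\
     (free_energy mu L V theta_d rho <= free_energy mu L V theta_d (@rho0 R d L))%E) ->
  forall theta : R, theta_d < theta ->
    ~ (forall rho, densities mu L rho ->
         (free_energy mu L V theta (@rho0 R d L) <= free_energy mu L V theta rho)%E).
Proof.
move=> d_gt0 mu_box L_gt0 [[iV _ _ _] _] td_ge0 [rho [[mrho rho_ge0 rho1] [rho_neq]]].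
move=> le_td t td_lt_t rho0_min; move: (rho0_min rho (And3 mrho rho_ge0 rho1)).
have E0_fin := uniform_interaction_fin_num mu_box L_gt0 d_gt0 iV.
set E0 := (\int[mu]_(x in cell L) _)%E in E0_fin.
have F0 theta : free_energy mu L V theta (rho0 L) =
    ((ln (L ^+ d)^-1)%:E + (2^-1 * theta * L ^+ d)%:E * (fine E0)%:E)%E.
  rewrite /free_energy asboolT; last exact: integrable_uniform_entropy.
  by rewrite (uniform_entropy mu_box L_gt0) fineK.
move: le_td; rewrite !F0 /free_energy; case: asboolP => [ient|_]; last by rewrite leye_eq.
have := entropy_gt_uniform (measurable_cell L) (exprn_gt0 d L_gt0)
  (measure_cell mu_box L_gt0) mrho rho_ge0 rho1 ient rho_neq.
have := integrable_fin_num (measurable_cell L) ient.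
case: (\int[mu]_(x in cell L) _)%E => // S _; rewrite lte_fin => S_gt le_td.
apply/negP; rewrite -ltNge; apply: affine_energy_crossing le_td => //.
- by rewrite mulr_ge0 // ?mulr_ge0 // ltW // exprn_gt0.
- by rewrite ltr_pM2r ?exprn_gt0 // ltr_pM2l.
Qed.
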